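(* Let $n,i,j$ be positive integers with $i+2\le j\le n-1$, and let $\lambda=i\,n\,(j-1)\,j$ and $\mu=(j-1)\,j\,n\,i$ (words of length $4$). For $\pi\in X_n(\lambda)$ with $\lambda$-decomposition $(\alpha,\lambda,\gamma,\delta)$, the permutation $\gamma'\mu\alpha'\delta$ lies in $X_n(\mu)$ and its $\mu$-decomposition is $(\gamma',\mu,\alpha',\delta)$. The map $X_n(\lambda)\to X_n(\mu)$ given by $(\alpha,\lambda,\gamma,\delta)\mapsto(\gamma',\mu,\alpha',\delta)$ (i.e. $\pi\mapsto\gamma'\mu\alpha'\delta$) is a bijection, whose inverse is the map sending $\sigma\in X_n(\mu)$ with $\mu$-decomposition $(\alpha,\mu,\gamma,\delta)$ to $(\gamma',\lambda,\alpha',\delta)$, i.e. to $\gamma'\lambda\alpha'\delta$.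
   Context: For a word $w=w_1\cdots w_k$ of pairwise distinct positive integers, an ascent is an index $t$ with $w_t<w_{t+1}$, a descent one with $w_t>w_{t+1}$, and the height is $h(w)=(\#\text{ascents})-(\#\text{descents})$ ($h(w)=0$ if $k\le1$). The word is ballot if every prefix has nonnegative height. $\mathcal{B}$ denotes the set of all finite ballot words of pairwise distinct positive integers (including the empty word). A ballot permutation of $[n]$ is a permutation $\pi_1\cdots\pi_n$ in one-line notation that is a ballot word. For a word $w$, $w_{-1}$ is its last letter and $w'=w_k\cdots w_1$ its reversal. Juxtaposition denotes concatenation. For a nonempty $\omega\in\mathcal{B}$, $X_n(\omega)$ is the set of ballot permutations $\pi$ of $[n]$ that can be written as $\pi=\alpha\omega\gamma\delta$ (with $\alpha,\gamma,\delta$ possibly empty) such that $h(\alpha\omega\gamma)=h(\omega)$. For $\pi\in X_n(\omega)$, its $\omega$-decomposition is the (unique) 4-tuple $(\alpha,\omega,\gamma,\delta)$ with $\pi=\alpha\omega\gamma\delta$, $h(\alpha\omega\gamma)=h(\omega)$ and $\gamma'\omega_{-1}\in\mathcal{B}$, where $\gamma$ is of maximal length among all words with these properties. *)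

From mathcomp Require Import all_boot all_order all_algebra.
Set Implicit Arguments. Unset Strict Implicit. Unset Printing Implicit Defensive.
Import Order.TTheory GRing.Theory Num.Theory.

Definition n_asc (w : seq nat) : nat :=
  count (fun p : nat * nat => p.1 < p.2) (zip w (behead w)).
Definition n_desc (w : seq nat) : nat :=
  count (fun p : nat * nat => p.2 < p.1) (zip w (behead w)).

Definition height (w : seq nat) : int := (n_asc w)%:Z - (n_desc w)%:Z.

Definition ballot (w : seq nat) : Prop :=
  forall k : nat, (0 <= height (take k w))%R.

Definition inB (w : seq nat) : Prop :=
  uniq w /\ all (fun x => 0 < x) w /\ ballot w.

Definition ballot_perm (n : nat) (p : seq nat) : Prop :=
  perm_eq p (iota 1 n) /\ ballot p.

Definition inX (n : nat) (om p : seq nat) : Prop :=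
  ballot_perm n p /\
  exists a g d : seq nat, p = a ++ om ++ g ++ d /\ height (a ++ om ++ g) = height om.

(* the three defining properties of an omega-decomposition, without maximality;
   last 0 om is om_{-1} (om is nonempty in all uses) *)
Definition decomp_cond (om p a g d : seq nat) : Prop :=
  p = a ++ om ++ g ++ d /\ height (a ++ om ++ g) = height om /\
  inB (rev g ++ [:: last 0 om]).

Definition is_decomp (om p a g d : seq nat) : Prop :=
  decomp_cond om p a g d /\
  forall a' g' d', decomp_cond om p a' g' d' -> size g' <= size g.

From mathcomp Require Import all_boot all_order all_algebra zify.
From Stdlib Require Import Classical ClassicalEpsilon.
Set Implicit Arguments. Unset Strict Implicit. Unset Printing Implicit Defensive.
Import Order.TTheory GRing.Theory Num.Theory.
Local Open Scope ring_scope.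

Definition step (x y : nat) : int := (x < y)%N%:Z - (y < x)%N%:Z.

Definition junction (u v : seq nat) : int :=
  if (u == [::]) || (v == [::]) then 0 else step (last 0%N u) (head 0%N v).

Lemma stepC x y : step y x = - step x y.
Proof. rewrite /step; lia. Qed.

Lemma step_bound x y : -1 <= step x y <= 1.
Proof. by rewrite /step; case: (x < y)%N; case: (y < x)%N. Qed.

Lemma step_neq x y : x != y -> step x y = 1 \/ step x y = -1.
Proof. by rewrite /step; case: ltngtP; [left|right|]. Qed.

Lemma junctionE u v : u != [::] -> v != [::] ->
  junction u v = step (last 0%N u) (head 0%N v).
Proof. by rewrite /junction => /negbTE -> /negbTE ->. Qed.

Lemma junction_bound u v : -1 <= junction u v <= 1.
Proof. by rewrite /junction; case: ifP => _; [|exact: step_bound]. Qed.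

Lemma junction_nill v : junction [::] v = 0.
Proof. by []. Qed.

Lemma junction_nilr u : junction u [::] = 0.
Proof. by rewrite /junction orbT. Qed.

Lemma junction_catr u v w : v != [::] -> junction u (v ++ w) = junction u v.
Proof. by case: v => // x v _; rewrite /junction /= !orbF. Qed.

Lemma junction_catl u v w : v != [::] -> junction (u ++ v) w = junction v w.
Proof.
case: v => // x v _; rewrite /junction /= -!size_eq0 size_cat /= addnS /= last_cat.
by case: u => //= y u; case: ifP.
Qed.

Lemma junction_take u v k : (0 < k)%N -> junction u (take k v) = junction u v.
Proof. by case: k => // k _; case: v. Qed.

Lemma junction_last u v : u != [::] -> junction u v = junction [:: last 0%N u] v.
Proof. by case: u. Qed.

Lemma junction_rev u v : junction (rev v) (rev u) = - junction u v.
Proof.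
rewrite /junction -!size_eq0 !size_rev.
case: u => [|x u]; first by rewrite /= orbT oppr0.
case: v => [|y v]; first by rewrite /= oppr0.
by rewrite /= -stepC rev_cons last_rcons lastI rev_rcons.
Qed.

Lemma uniq_junction u v : uniq (u ++ v) -> u != [::] -> v != [::] ->
  junction u v = 1 \/ junction u v = -1.
Proof.
case: u => // x u; case: v => // y v + _ _.
rewrite cat_uniq => /and3P [_ /hasPn y_notin _].
rewrite /junction /=; apply: step_neq; apply: contraNneq (y_notin y (mem_head _ _)).
by move=> <-; rewrite mem_last.
Qed.

Lemma height_le1 u : (size u <= 1)%N -> height u = 0.
Proof. by case: u => [|x [|y u]]. Qed.

Lemma height_cons x v : height (x :: v) = junction [:: x] v + height v.
Proof.
case: v => [|y v] //; rewrite /junction /= /height /n_asc /n_desc /= /step.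
set a := count _ _; set b := count _ _; rewrite !PoszD; lia.
Qed.

Lemma height_cat u v : height (u ++ v) = height u + junction u v + height v.
Proof.
elim: u => [|x u IHu]; first by rewrite /junction /= add0r.
rewrite cat_cons !height_cons IHu.
case: u {IHu} => [|y u]; first by rewrite junction_nill junction_nilr /=; lia.
have -> : junction [:: x, y & u] v = junction (y :: u) v by exact: (junction_catl [:: x]).
by rewrite junction_catr //; lia.
Qed.

Lemma height_rev u : height (rev u) = - height u.
Proof.
elim: u => [|x u IHu] //; rewrite rev_cons -cats1 height_cat IHu (height_cons x u).
have -> : junction (rev u) [:: x] = - junction [:: x] u by exact: (junction_rev [:: x] u).
by rewrite /= addr0; lia.
Qed.

Lemma height_take1 u v : height (u ++ take 1 v) = height u + junction u v.
Proof.
case: v => [|x v]; first by rewrite /= cats0 junction_nilr addr0.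
by rewrite height_cat junction_take // [height (take 1 _)]height_le1 ?addr0 // size_take_min geq_minl.
Qed.

Lemma height_takeS u v k :
  height (u ++ take k.+1 v) = height (u ++ take k v) + junction (u ++ take k v) (drop k v).
Proof. by rewrite -addn1 takeD catA height_take1. Qed.

Lemma height_cons_last u v : u != [::] ->
  height (last 0%N u :: v) = height (u ++ v) - height u.
Proof.
by move=> u_neq0; rewrite height_cons height_cat -junction_last //; lia.
Qed.

Lemma height_drop_le u v k :
  height (drop k v) <= height (u ++ v) - height (u ++ take k v) + 1.
Proof.
rewrite -{2}(cat_take_drop k v) catA height_cat.
by have := junction_bound (u ++ take k v) (drop k v); lia.
Qed.

Lemma height_take_step u v k :
  -1 <= height (u ++ take k.+1 v) - height (u ++ take k v) <= 1.
Proof.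
by rewrite height_takeS; have := junction_bound (u ++ take k v) (drop k v); lia.
Qed.

Lemma first_passage (f : nat -> int) c k :
  (forall t, -1 <= f t.+1 - f t <= 1) -> c < f 0%N -> f k <= c ->
  exists m, f m = c /\ forall t, (t < m)%N -> c < f t.
Proof.
move=> f_step f0_gt fk_le.
have [m fm_le m_min] := ex_minnP (ex_intro (fun t => f t <= c) k fk_le).
have below t : (t < m)%N -> c < f t.
  by move=> t_lt; rewrite ltNge; apply: contraTN t_lt => /m_min; rewrite -leqNgt.
case: m fm_le below {m_min} => [|m] fm_le below; first by move: f0_gt; rewrite ltNge fm_le.
by exists m.+1; split => //; have := below m (ltnSn m); have := f_step m; lia.
Qed.

Lemma ballot_prefix w u v : ballot w -> w = u ++ v -> 0 <= height u.
Proof. by move=> + w_eq => /(_ (size u)); rewrite w_eq take_size_cat. Qed.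

Lemma ballot_catl u v : ballot (u ++ v) -> ballot u.
Proof.
move=> uv_ballot k; apply: (ballot_prefix (v := drop k u ++ v) uv_ballot).
by rewrite catA cat_take_drop.
Qed.

Lemma ballot_cat u v :
  ballot u -> ballot v -> 0 <= height u + junction u v -> ballot (u ++ v).
Proof.
move=> u_ballot v_ballot uv_ge0 k; rewrite take_cat; case: ifP => _; first exact: u_ballot.
case: (k - size u)%N => [|t]; first by rewrite take0 cats0; apply: (ballot_prefix u_ballot (esym (cats0 u))).
rewrite height_cat junction_take //; have := v_ballot t.+1; lia.
Qed.

Lemma ballot_cat_rev u v :
  ballot u -> ballot v -> 0 <= height (u ++ rev v) -> ballot (u ++ rev v).
Proof.
move=> u_ballot v_ballot uv_ge0 k; rewrite take_cat; case: ifP => _; first exact: u_ballot.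
rewrite take_rev; set s := (size v - _)%N.
have [->|drop_neq0] := eqVneq (drop s v) [::].
  by rewrite cats0; apply: (ballot_prefix u_ballot (esym (cats0 u))).
have := v_ballot s.+1; rewrite -[take s.+1 v]cat0s height_takeS /=.
move: uv_ge0; rewrite -{1}(cat_take_drop s v) rev_cat catA height_cat.
rewrite junction_catl -?size_eq0 ?size_rev ?size_eq0 // junction_rev height_rev; lia.
Qed.

Lemma ballot_seq1 x : ballot [:: x].
Proof. by move=> k; rewrite height_le1 // size_take_min geq_minr. Qed.

Definition coballot (w : seq nat) : Prop := forall k, height (drop k w) <= 0.

Lemma ballot_rev w : ballot (rev w) <-> coballot w.
Proof.
split=> [w_ballot k | w_coballot k]; last first.
  by rewrite take_rev height_rev oppr_ge0.
case: (leqP k (size w)) => [k_le|k_gt]; last by rewrite drop_oversize ?(ltnW k_gt).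
have := w_ballot (size w - k)%N; rewrite take_rev height_rev subKn //; lia.
Qed.

Lemma inB_rev w : inB (rev w) <-> [/\ uniq w, all (fun x => 0 < x)%N w & coballot w].
Proof. by rewrite /inB rev_uniq all_rev ballot_rev; split=> [[? []]|[]]. Qed.

Lemma ballot_perm_uniq n p : ballot_perm n p -> uniq p.
Proof. by case=> p_perm _; rewrite (perm_uniq p_perm) iota_uniq. Qed.

Lemma ballot_perm_pos n p : ballot_perm n p -> all (fun x => 0 < x)%N p.
Proof. by case=> p_perm _; rewrite (perm_all _ p_perm); apply/allP => x; rewrite mem_iota => /andP []. Qed.

Lemma coballot_seq1 x : coballot [:: x].
Proof. by move=> k; rewrite height_le1 // size_drop leq_subr. Qed.

Lemma coballot_cat u v : coballot u -> coballot v -> height v < 0 -> coballot (u ++ v).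
Proof.
move=> u_coballot v_coballot v_lt0 k; rewrite drop_cat; case: ifP => _; last exact: v_coballot.
by rewrite height_cat; have := u_coballot k; have := junction_bound (drop k u) v; lia.
Qed.

Section FirstReturn.
Variables u v : seq nat.
Hypothesis prefix_gt : forall k, (k < size v)%N -> height (u ++ v) < height (u ++ take k v).

Lemma coballot_first_return : coballot v.
Proof.
move=> k; case: (ltnP k (size v)) => [k_lt|k_ge]; last by rewrite drop_oversize.
by have := height_drop_le u v k; have := prefix_gt k_lt; lia.
Qed.

Lemma coballot_cons_first_return : u != [::] -> coballot (last 0%N u :: v).
Proof.
move=> u_neq0 [|k]; last exact: coballot_first_return.
rewrite drop0 height_cons_last //; case: (posnP (size v)) => [/eqP|v_gt0].
  by rewrite size_eq0 => /eqP ->; rewrite cats0 subrr.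
by rewrite subr_le0 ltW //; have := prefix_gt v_gt0; rewrite take0 cats0.
Qed.

End FirstReturn.

Lemma head_rev0 (s : seq nat) : head 0%N (rev s) = last 0%N s.
Proof. by case/lastP: s => // s x; rewrite rev_rcons last_rcons. Qed.

Lemma last_rev0 (s : seq nat) : last 0%N (rev s) = head 0%N s.
Proof. by case: s => // x s; rewrite rev_cons last_rcons. Qed.

Lemma mem_head0 (s : seq nat) : s != [::] -> head 0%N s \in s.
Proof. by case: s => // x s _; rewrite mem_head. Qed.

Lemma mem_last0 (s : seq nat) : s != [::] -> last 0%N s \in s.
Proof. by case: s => // x s _; rewrite /= mem_last. Qed.

Lemma all_subset (a : pred nat) s t : {subset s <= t} -> all a t -> all a s.
Proof. by move=> s_sub /allP a_t; apply/allP => x /s_sub /a_t. Qed.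

Lemma catr_neq0 (u v : seq nat) : v != [::] -> u ++ v != [::].
Proof. by case: u. Qed.

Lemma catl_neq0 (u v : seq nat) : u != [::] -> u ++ v != [::].
Proof. by case: u. Qed.

Lemma last_catr0 u v : v != [::] -> last 0%N (u ++ v) = last 0%N v.
Proof. by case: v => // y v _; rewrite last_cat. Qed.

Lemma uniq_cons_last u v w : u != [::] -> uniq (u ++ v ++ w) -> uniq (last 0%N u :: v).
Proof.
case/lastP: u => // u y _; rewrite last_rcons cat_rcons cat_uniq => /and3P [_ _].
by rewrite -cat_cons cat_uniq => /andP [].
Qed.

Lemma uniq_split_unique (a om r a' r' : seq nat) : om != [::] -> uniq (a ++ om ++ r) ->
  a ++ om ++ r = a' ++ om ++ r' -> a = a' /\ r = r'.
Proof.
case: om => // x om _ uniq_p p_eq.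
have index_x b s : uniq (b ++ x :: s) -> index x (b ++ x :: s) = size b.
  rewrite cat_uniq => /and3P [_ /hasPn x_notin _].
  by rewrite index_cat (negbTE (x_notin x (mem_head _ _))) /= eqxx addn0.
have size_eq : size a = size a'.
  by rewrite -(index_x _ _ uniq_p) -(index_x a' (om ++ r')) -!cat_cons -?p_eq.
move/eqP: p_eq; rewrite eqseq_cat // => /andP [/eqP -> /eqP [/eqP]].
by rewrite eqseq_cat // => /andP [_ /eqP].
Qed.

Definition decomp_swap (om om2 p : seq nat) : seq nat :=
  epsilon (inhabits [::])
    (fun s => exists a g d, is_decomp om p a g d /\ s = rev g ++ om2 ++ rev a ++ d).

Section Decomposition.
Variable om : seq nat.
Hypothesis om_neq0 : om != [::].

Lemma decomp_condI (p a g d : seq nat) :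
  uniq p -> all (fun x => 0 < x)%N p -> p = a ++ om ++ g ++ d ->
  height (a ++ om ++ g) = height om -> coballot (last 0%N om :: g) ->
  decomp_cond om p a g d.
Proof.
move=> p_uniq p_pos p_eq height_eq g_coballot; do 2!split => //.
rewrite cats1 -rev_cons; apply/inB_rev; split => //.
  by move: p_uniq; rewrite p_eq cat_uniq => /and3P [_ _ /(uniq_cons_last om_neq0)].
apply: all_subset p_pos => x; rewrite inE p_eq !mem_cat => /orP [/eqP ->|->].
  by case: (om) om_neq0 => //= y s _; rewrite mem_last orbT.
by rewrite !orbT.
Qed.

Lemma decomp_unique (p a g d a' g' d' : seq nat) : uniq p ->
  is_decomp om p a g d -> is_decomp om p a' g' d' -> [/\ a = a', g = g' & d = d'].
Proof.
move=> p_uniq [[p_eq c] g_max] [[p_eq' c'] g'_max].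
have uniq_p : uniq (a ++ om ++ g ++ d) by rewrite -p_eq.
have [a_eq gd_eq] := uniq_split_unique om_neq0 uniq_p (etrans (esym p_eq) p_eq').
have size_eq : size g = size g'.
  by apply/eqP; rewrite eqn_leq (g'_max a g d) ?(g_max a' g' d') //; split.
by move/eqP: gd_eq; rewrite eqseq_cat // => /andP [/eqP -> /eqP ->].
Qed.

Lemma decomp_cond_exists (p a g d : seq nat) :
  uniq p -> all (fun x => 0 < x)%N p -> ballot p -> p = a ++ om ++ g ++ d ->
  height (a ++ om ++ g) = height om -> exists g' d', decomp_cond om p a g' d'.
Proof.
move=> p_uniq p_pos p_ballot p_eq height_eq.
pose f t := height ((a ++ om) ++ take t (g ++ d)).
have f0_ge : height om <= f 0%N.
  have p_eq1 : p = (a ++ take 1 om) ++ drop 1 om ++ g ++ d.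
    by rewrite p_eq -catA (catA (take 1 om)) cat_take_drop.
  have := ballot_prefix p_ballot p_eq1.
  by rewrite /f take0 cats0 height_take1 height_cat; lia.
have [f0_le|f0_gt] := lerP (f 0%N) (height om).
  exists [::], (g ++ d); apply: decomp_condI => //.
  - by move: f0_le f0_ge; rewrite /f take0 catA !cats0; lia.
  - exact: coballot_seq1.
have fg_le : f (size g) <= height om by rewrite /f take_size_cat // -catA height_eq.
have f_step t : -1 <= f t.+1 - f t <= 1 by exact: height_take_step.
have [m [fm_eq fm_gt]] := first_passage f_step f0_gt fg_le.
exists (take m (g ++ d)), (drop m (g ++ d)); apply: decomp_condI => //.
- by rewrite cat_take_drop.
- by rewrite catA.
rewrite -(last_catr0 a om_neq0).
apply: (coballot_cons_first_return (u := a ++ om)); last exact: catr_neq0.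
move=> k k_lt; have k_lt_m : (k < m)%N.
  by apply: leq_trans k_lt _; rewrite size_take_min geq_minl.
rewrite take_takel; last exact: ltnW.
by rewrite -[X in X < _]/(f m) fm_eq; exact: fm_gt.
Qed.

Lemma decomp_exists (p a g d : seq nat) :
  uniq p -> all (fun x => 0 < x)%N p -> ballot p -> p = a ++ om ++ g ++ d ->
  height (a ++ om ++ g) = height om -> exists a' g' d', is_decomp om p a' g' d'.
Proof.
move=> p_uniq p_pos p_ballot p_eq height_eq.
pose P k := exists a' g' d', decomp_cond om p a' g' d' /\ size g' = k.
pose Pb : pred nat := fun k => if excluded_middle_informative (P k) then true else false.
have P_dec k : reflect (P k) (Pb k) by rewrite /Pb; case: excluded_middle_informative; constructor.
have P_ex : exists k, Pb k.
  have [g' [d' c]] := decomp_cond_exists p_uniq p_pos p_ballot p_eq height_eq.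
  by exists (size g'); apply/P_dec; exists a, g', d'.
have P_le k : Pb k -> (k <= size p)%N.
  move=> /P_dec [a' [g' [d' [[p_eq' _] <-]]]].
  by rewrite p_eq' !size_cat; lia.
have [k /P_dec [a' [g' [d' [c <-]]]] k_max] := ex_maxnP P_ex P_le.
exists a', g', d'; split => // a'' g'' d'' c''.
by apply/k_max/P_dec; exists a'', g'', d''.
Qed.

Lemma decomp_ballot_tail (p a g d : seq nat) :
  uniq p -> all (fun x => 0 < x)%N p -> ballot p -> height om <= 1 ->
  is_decomp om p a g d -> ballot d.
Proof.
move=> p_uniq p_pos p_ballot om_le1 [[p_eq [height_eq g_inB]] g_max] k.
rewrite leNgt; apply/negP => dk_lt0.
pose f t := height (take t d).
have f_step t : -1 <= f t.+1 - f t <= 1 by exact: (height_take_step [::]).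
have f0_gt : -1 < f 0%N by rewrite /f take0.
have fk_le : f k <= -1 by rewrite /f; lia.
have [m [fm_eq fm_gt]] := first_passage f_step f0_gt fk_le.
set e := take m d.
have e_neq0 : e != [::] by apply/eqP => e_nil; move: fm_eq; rewrite /f -/e e_nil => /eqP.
set q := a ++ om ++ g.
have p_eq2 : p = q ++ e ++ drop m d by rewrite p_eq cat_take_drop /q -!catA.
have q_height : height q = height om by [].
have qe_uniq : uniq (q ++ e) by move: p_uniq; rewrite p_eq2 catA cat_uniq => /andP [].
have [j_pos|j_neg] := uniq_junction qe_uniq (catr_neq0 a (catl_neq0 g om_neq0)) e_neq0.
  have e_coballot : coballot e.
    apply: (coballot_first_return (u := [::])) => t t_lt.
    have t_lt_m : (t < m)%N by apply: leq_trans t_lt _; rewrite size_take_min geq_minl.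
    by rewrite /= take_takel ?(ltnW t_lt_m) //; have := fm_gt t t_lt_m; rewrite -fm_eq.
  have : decomp_cond om p a (g ++ e) (drop m d).
    apply: decomp_condI => //; first by rewrite p_eq2 /q -!catA.
      have -> : a ++ om ++ g ++ e = q ++ e by rewrite /q -!catA.
      rewrite height_cat j_pos q_height.
      by rewrite -[height e]/(f m) fm_eq; lia.
    apply: (coballot_cat (u := last 0%N om :: g)) => //; last by rewrite -[height e]/(f m) fm_eq.
    by move: g_inB; rewrite cats1 -rev_cons => /inB_rev [].
  move/g_max; rewrite size_cat -{2}(addn0 (size g)) leq_add2l leqn0 size_eq0.
  by rewrite (negbTE e_neq0).
have := ballot_prefix p_ballot (etrans p_eq2 (catA _ _ _)).
by rewrite height_cat j_neg q_height -[height e]/(f m) fm_eq; lia.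
Qed.

Lemma decomp_swapE om2 (p a g d : seq nat) : uniq p -> is_decomp om p a g d ->
  decomp_swap om om2 p = rev g ++ om2 ++ rev a ++ d.
Proof.
move=> p_uniq p_decomp; rewrite /decomp_swap.
have swap_ex : exists s, exists a g d, is_decomp om p a g d /\ s = rev g ++ om2 ++ rev a ++ d.
  by exists (rev g ++ om2 ++ rev a ++ d), a, g, d.
have [a' [g' [d' [p_decomp' ->]]]] := epsilon_spec (inhabits [::]) _ swap_ex.
by have [-> -> ->] := decomp_unique p_uniq p_decomp' p_decomp.
Qed.

End Decomposition.

Definition order_equiv_off (A : seq nat) (x y : nat) : Prop :=
  forall z, z \notin A -> step z x = step z y.

Lemma order_equiv_offC A x y : order_equiv_off A x y -> order_equiv_off A y x.
Proof. by move=> xy z /xy. Qed.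

Lemma order_equiv_off_pred A x : (x - 1)%N \in A -> x \in A -> order_equiv_off A (x - 1) x.
Proof.
move=> x1_in x_in z z_notin; have [z_x1 z_x] : z != (x - 1)%N /\ z != x.
  by split; apply: contraNneq z_notin => ->.
rewrite /step; have -> : (z < x - 1)%N = (z < x)%N by apply/idP/idP; lia.
by have -> : (x - 1 < z)%N = (x < z)%N by apply/idP/idP; lia.
Qed.

Section Swap.
Variables om om2 : seq nat.
Hypothesis om_neq0 : om != [::].
Hypothesis om_perm : perm_eq om om2.
Hypothesis height_om : height om <= 1.
Hypothesis height_om2 : 1 <= height om2.
Hypothesis om2_ballot : ballot om2.
Hypothesis head_om2 : order_equiv_off om (head 0%N om2) (last 0%N om).
Hypothesis last_om2 : order_equiv_off om (last 0%N om2) (head 0%N om).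

Let om2_neq0 : om2 != [::].
Proof. by rewrite -size_eq0 -(perm_size om_perm) size_eq0. Qed.

Section SwapDecomp.
Variables p a g d : seq nat.
Hypothesis p_uniq : uniq p.
Hypothesis p_pos : all (fun x => 0 < x)%N p.
Hypothesis p_ballot : ballot p.
Hypothesis p_decomp : is_decomp om p a g d.

Local Notation sigma := (rev g ++ om2 ++ rev a ++ d).

Let p_eq : p = a ++ om ++ g ++ d.
Proof. by case: p_decomp => [[]]. Qed.

Let height_eq : height (a ++ om ++ g) = height om.
Proof. by case: p_decomp => [[_ []]]. Qed.

Let g_ballot : ballot (rev g ++ [:: last 0%N om]).
Proof. by case: p_decomp => [[_ [_ [_ []]]]]. Qed.

Let a_ballot : ballot a.
Proof. by apply: (ballot_catl (v := om ++ g ++ d)); rewrite -p_eq. Qed.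

Let notin_om x : (x \in a) || (x \in g) -> x \notin om.
Proof.
move: p_uniq; rewrite p_eq uniq_catCA cat_uniq => /and3P [_ /hasPn notin _] x_in.
by apply: notin; rewrite !mem_cat orbA x_in.
Qed.

Lemma junction_swap_left : junction (rev g) om2 = - junction om g.
Proof.
have [->|g_neq0] := eqVneq g [::]; first by rewrite junction_nilr oppr0.
rewrite !junctionE -?size_eq0 ?size_rev ?size_eq0 // last_rev0 head_om2; first exact: stepC.
by apply: notin_om; rewrite mem_head0 ?orbT.
Qed.

Lemma junction_swap_right : junction om2 (rev a) = - junction a om.
Proof.
have [->|a_neq0] := eqVneq a [::]; first by rewrite junction_nilr oppr0.
rewrite !junctionE -?size_eq0 ?size_rev ?size_eq0 // head_rev0 stepC last_om2; first by [].
by apply: notin_om; rewrite mem_last0.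
Qed.

Lemma height_swap : height (rev g ++ om2 ++ rev a) = height om2.
Proof.
move: height_eq; rewrite !height_cat !junction_catr // height_rev height_rev.
by rewrite junction_swap_left junction_swap_right; lia.
Qed.

Lemma ballot_swap : ballot sigma.
Proof.
have g_ballot' := ballot_catl g_ballot.
have g_junction : 0 <= height (rev g) + junction (rev g) om2.
  have := ballot_prefix g_ballot (esym (cats0 _)).
  rewrite height_cat (height_le1 (u := [:: last 0%N om])) // addr0.
  by rewrite -[[:: _]]/(rev [:: last 0%N om]) junction_rev -junction_last // junction_swap_left; lia.
have gom2_ballot := ballot_cat g_ballot' om2_ballot g_junction.
have S_ballot : ballot ((rev g ++ om2) ++ rev a).
  by apply: ballot_cat_rev => //; rewrite -catA height_swap; lia.
rewrite !catA; apply: (ballot_cat S_ballot).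
  exact: (decomp_ballot_tail om_neq0 p_uniq p_pos p_ballot height_om p_decomp).
by rewrite -!catA height_swap; have := junction_bound (rev g ++ om2 ++ rev a) d; lia.
Qed.

Lemma perm_swap : perm_eq sigma p.
Proof.
apply/permP => P; rewrite p_eq !count_cat !count_rev (permP om_perm).
by lia.
Qed.

Lemma junction_last_om2 : junction a [:: last 0%N om2] = junction a om.
Proof.
have [->|a_neq0] := eqVneq a [::]; first by [].
rewrite !junctionE // last_om2; first by [].
by apply: notin_om; rewrite mem_last0.
Qed.

Lemma decomp_cond_swap : decomp_cond om2 sigma (rev g) (rev a) d.
Proof.
apply: (decomp_condI om2_neq0).
- by rewrite (perm_uniq perm_swap).
- by rewrite (perm_all _ perm_swap).
- by [].
- exact: height_swap.
apply/ballot_rev; rewrite rev_cons revK -cats1.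
apply: ballot_cat a_ballot (ballot_seq1 _) _; rewrite junction_last_om2.
have p_eq1 : p = (a ++ take 1 om) ++ drop 1 om ++ g ++ d.
  by rewrite p_eq -catA (catA (take 1 om)) cat_take_drop.
by rewrite -height_take1; apply: ballot_prefix p_ballot p_eq1.
Qed.

Lemma decomp_swap_max a' g' d' : decomp_cond om2 sigma a' g' d' -> (size g' <= size (rev a))%N.
Proof.
move=> [sigma_eq [height_eq' g'_inB]].
have sigma_uniq : uniq sigma by rewrite (perm_uniq perm_swap).
have [a'_eq gd_eq] := uniq_split_unique om2_neq0 sigma_uniq sigma_eq.
rewrite leqNgt; apply/negP => size_lt; move: height_eq'; set e := take (size g' - size (rev a)) d.
have g'_eq : g' = rev a ++ e.
  by rewrite -[g'](take_size_cat (n := size g') d') // -gd_eq take_cat ltnNge (ltnW size_lt).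
have e_neq0 : e != [::].
  by apply: contraTneq size_lt => e_nil; rewrite g'_eq e_nil cats0 ltnn.
have e_ge0 : 0 <= height e.
  exact: (decomp_ballot_tail om_neq0 p_uniq p_pos p_ballot height_om p_decomp).
have e_le0 : height e <= 0.
  move: g'_inB => [_ [_ /ballot_catl]]; rewrite g'_eq rev_cat revK => /ballot_catl.
  by move=> /(_ (size e)); rewrite take_rev subnn drop0 height_rev oppr_ge0.
have Se_uniq : uniq ((rev g ++ om2 ++ rev a) ++ e).
  move: sigma_uniq; rewrite -(cat_take_drop (size g' - size (rev a)) d) -/e.
  by rewrite !catA cat_uniq => /andP [].
have -> : a' ++ om2 ++ g' = (rev g ++ om2 ++ rev a) ++ e by rewrite -a'_eq g'_eq -!catA.
rewrite height_cat height_swap.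
by case: (uniq_junction Se_uniq (catr_neq0 _ (catl_neq0 _ om2_neq0)) e_neq0) => ->; lia.
Qed.

Lemma is_decomp_swap : is_decomp om2 sigma (rev g) (rev a) d.
Proof. by split; [exact: decomp_cond_swap | exact: decomp_swap_max]. Qed.

End SwapDecomp.

Lemma inX_swap n (p a g d : seq nat) : inX n om p -> is_decomp om p a g d ->
  inX n om2 (rev g ++ om2 ++ rev a ++ d)
  /\ is_decomp om2 (rev g ++ om2 ++ rev a ++ d) (rev g) (rev a) d.
Proof.
move=> [p_bperm _] p_decomp; have [p_perm p_ballot] := p_bperm.
have p_uniq := ballot_perm_uniq p_bperm; have p_pos := ballot_perm_pos p_bperm.
split; last exact: is_decomp_swap p_uniq p_pos p_ballot p_decomp.
split; first split.
- exact: perm_trans (perm_swap p_uniq p_pos p_decomp) p_perm.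
- exact: ballot_swap p_uniq p_pos p_ballot p_decomp.
by exists (rev g), (rev a), d; rewrite (height_swap p_uniq p_pos p_decomp).
Qed.

Lemma decomp_swapK n p : inX n om p ->
  inX n om2 (decomp_swap om om2 p) /\ decomp_swap om2 om (decomp_swap om om2 p) = p.
Proof.
move=> p_inX; have [p_bperm [a [g [d [p_eq height_eq]]]]] := p_inX.
have p_uniq := ballot_perm_uniq p_bperm.
have [a' [g' [d' p_decomp]]] :=
  decomp_exists om_neq0 p_uniq (ballot_perm_pos p_bperm) p_bperm.2 p_eq height_eq.
have [s_inX s_decomp] := inX_swap p_inX p_decomp.
rewrite (decomp_swapE om_neq0 om2 p_uniq p_decomp); split => //.
rewrite (decomp_swapE om2_neq0 om (ballot_perm_uniq s_inX.1) s_decomp) !revK.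
by case: p_decomp => [[]].
Qed.

End Swap.

Lemma step_lt x y : (x < y)%N -> step x y = 1.
Proof. by rewrite /step => lt_xy; rewrite lt_xy ltnNge ltnW. Qed.

Lemma step_gt x y : (y < x)%N -> step x y = -1.
Proof. by rewrite /step => lt_yx; rewrite lt_yx ltnNge ltnW. Qed.

Lemma ballot_seq4 x1 x2 x3 x4 :
  0 <= step x1 x2 -> 0 <= step x1 x2 + step x2 x3 ->
  0 <= step x1 x2 + step x2 x3 + step x3 x4 -> ballot [:: x1; x2; x3; x4].
Proof.
move=> h1 h2 h3 [|[|[|[|k]]]] //=;
  by rewrite !height_cons /junction /= (height_le1 (u := [::])) //; lia.
Qed.

Lemma height_seq4 x1 x2 x3 x4 :
  height [:: x1; x2; x3; x4] = step x1 x2 + step x2 x3 + step x3 x4.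
Proof. by rewrite !height_cons /junction /= (height_le1 (u := [::])) //; lia. Qed.

Local Close Scope ring_scope.

Theorem theorem2p3 (n i j : nat) :
  0 < i -> i + 2 <= j -> j <= n - 1 ->
  let lam := [:: i; n; j - 1; j] in
  let mu := [:: j - 1; j; n; i] in
  (* the image lies in X_n(mu) with the stated mu-decomposition *)
  (forall p a g d, inX n lam p -> is_decomp lam p a g d ->
     inX n mu (rev g ++ mu ++ rev a ++ d) /\
     is_decomp mu (rev g ++ mu ++ rev a ++ d) (rev g) (rev a) d) /\
  (* the map pi |-> gamma' mu alpha' delta is a bijection X_n(lam) -> X_n(mu)
     whose inverse is sigma |-> gamma' lam alpha' delta *)
  (exists f h : seq nat -> seq nat,
     (forall p a g d, inX n lam p -> is_decomp lam p a g d ->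
        f p = rev g ++ mu ++ rev a ++ d) /\
     (forall s a g d, inX n mu s -> is_decomp mu s a g d ->
        h s = rev g ++ lam ++ rev a ++ d) /\
     (forall p, inX n lam p -> inX n mu (f p) /\ h (f p) = p) /\
     (forall s, inX n mu s -> inX n lam (h s) /\ f (h s) = s)).
Proof.
move=> i_gt0 ij jn lam mu.
have [i_n j1_n j1_j j_n] : [/\ i < n, j - 1 < n, j - 1 < j & j < n] by split; lia.
have lam_mu : perm_eq lam mu by apply/permP => P; rewrite /=; lia.
have height_lam : height lam = 1%R.
  by rewrite height_seq4 (step_lt i_n) (step_gt j1_n) (step_lt j1_j).
have height_mu : height mu = 1%R.
  by rewrite height_seq4 (step_lt j1_j) (step_lt j_n) (step_gt i_n).
have ballot_lam : ballot lam.
  by apply: ballot_seq4; rewrite (step_lt i_n) ?(step_gt j1_n) ?(step_lt j1_j).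
have ballot_mu : ballot mu.
  by apply: ballot_seq4; rewrite (step_lt j1_j) ?(step_lt j_n) ?(step_gt i_n).
have equiv_lam : order_equiv_off lam (j - 1) j.
  by apply: order_equiv_off_pred; rewrite !inE eqxx ?orbT.
have equiv_mu : order_equiv_off mu j (j - 1).
  by apply/order_equiv_offC/order_equiv_off_pred; rewrite !inE eqxx ?orbT.
have le1 w : height w = 1%R -> (height w <= 1)%R by move=> ->.
have ge1 w : height w = 1%R -> (1 <= height w)%R by move=> ->.
have lam_swap := inX_swap (om := lam) (om2 := mu) isT lam_mu (le1 _ height_lam) (ge1 _ height_mu)
  ballot_mu equiv_lam (fun _ _ => erefl).
have lam_swapK := decomp_swapK (om := lam) isT lam_mu (le1 _ height_lam) (ge1 _ height_mu)
  ballot_mu equiv_lam (fun _ _ => erefl).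
have mu_swapK := decomp_swapK (om := mu) isT (etrans (perm_sym _ _) lam_mu) (le1 _ height_mu) (ge1 _ height_lam)
  ballot_lam (fun _ _ => erefl) equiv_mu.
split; first exact: lam_swap.
exists (decomp_swap lam mu), (decomp_swap mu lam); split; [|split; [|split]].
- by move=> p a g d [p_bperm _]; apply: decomp_swapE (ballot_perm_uniq p_bperm).
- by move=> s a g d [s_bperm _]; apply: decomp_swapE (ballot_perm_uniq s_bperm).
- exact: lam_swapK.
- exact: mu_swapK.
Qed.
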